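(* Let $f:\mathbb{R}^n\to\mathbb{R}$ and $c:\mathbb{R}^n\to\mathbb{R}^m$ ($m<n$) be smooth, with $g(x)=\nabla f(x)$ and Jacobian $J(x)=\nabla c(x)\in\mathbb{R}^{m\times n}$. Suppose noisy evaluations $\tilde f,\tilde c,\tilde g,\tilde J$ satisfy, for all $x$, $|\tilde f(x)-f(x)|\le\epsilon_f$, $\|\tilde c(x)-c(x)\|_1\le\epsilon_c$, $\|\tilde g(x)-g(x)\|\le\epsilon_g$, $\|\tilde J(x)-J(x)\|_{1,2}\le\epsilon_J$. Let $\{x_k\}$ be a sequence of points with $\sigma_{\min}(J_k)\ge\gamma$ for all $k$, where $\gamma>\epsilon_J$, and set $\delta=1/(\gamma-\epsilon_J)$, $\eta=1/\gamma$. For $\beta_k>0$ let $d_k$ solve $\min_d\ \tfrac12\beta_k\|d\|^2+\tilde g_k^Td$ subject to $\tilde c_k+\tilde J_kd=0$. Fix $\tau\in(0,1)$ and suppose that at every iteration $k$ the penalty parameter $\pi_k>0$ satisfies $$\pi_k\ge\frac{1}{1-\tau}\big\|(\tilde J_k\tilde J_k^T)^{-1}\tilde J_k\tilde g_k\big\|_\infty.$$ Then, with $\ell(x_k;d_k)=g_k^Td_k+\pi_k\|c_k+J_kd_k\|_1-\pi_k\|c_k\|_1$, $$\ell(x_k;d_k)\le-\frac{1}{\beta_k}g_k^TP_kg_k+\frac{1}{\beta_k}\big(\|g_k\|^2\eta\epsilon_J+\epsilon_g\|g_k\|\big)-\tau\pi_k\|c_k\|_1+\epsilon_g\delta(\|c_k\|_1+\epsilon_c)$$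 $$\qquad+\pi_k\Big((2-\tau)\epsilon_c+\epsilon_J\Big(\delta(\|c_k\|_1+\epsilon_c)+\frac{1}{\beta_k}\big(\|P_kg_k\|+\|g_k\|\eta\epsilon_J+\epsilon_g\big)\Big)\Big).$$
   Context: $\|\cdot\|$ denotes the Euclidean norm; $\|\cdot\|_{1,2}$ is the matrix norm $\sup_{x\ne0}\|Ax\|_1/\|x\|$ for $A\in\mathbb{R}^{m\times n}$; $\sigma_{\min}$ is the smallest singular value. Subscript $k$ denotes evaluation at $x_k$: $g_k=g(x_k)$, $c_k=c(x_k)$, $J_k=J(x_k)$, $\tilde g_k=\tilde g(x_k)$, $\tilde c_k=\tilde c(x_k)$, $\tilde J_k=\tilde J(x_k)$. $P_k=I-J_k^T(J_kJ_k^T)^{-1}J_k$ is the orthogonal projection onto the null space of $J_k$. *)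

From HB Require Import structures.
From mathcomp Require Import all_boot all_order all_algebra.
From mathcomp Require Import all_classical all_reals all_analysis.
Set Implicit Arguments. Unset Strict Implicit. Unset Printing Implicit Defensive.
Import Order.TTheory GRing.Theory Num.Theory.
Import numFieldNormedType.Exports.
Local Open Scope ring_scope.
Local Open Scope classical_set_scope.

Section Defs.
Variable R : realType.

Definition dotv n (u v : 'cV[R]_n) : R := \sum_(i < n) u i 0 * v i 0.
Definition norm2 n (v : 'cV[R]_n) : R := Num.sqrt (dotv v v).
Definition norm1 n (v : 'cV[R]_n) : R := \sum_(i < n) `|v i 0|.
Definition normInf n (v : 'cV[R]_n) : R := \big[Num.max/0]_(i < n) `|v i 0|.
Definition opnorm12 m n (A : 'M[R]_(m, n)) : R :=
  sup [set norm1 (A *m x) / norm2 x | x in [set x : 'cV[R]_n | x != 0]].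
Definition sigma_min m n (A : 'M[R]_(m, n)) : R :=
  Num.sqrt (inf [set a : R | eigenvalue (A *m A^T) a]).
Definition nullproj m n (A : 'M[R]_(m, n)) : 'M[R]_n :=
  1%:M - A^T *m invmx (A *m A^T) *m A.
Definition qp_solution m n (beta : R) (gt : 'cV[R]_n) (ct : 'cV[R]_m)
  (Jt : 'M[R]_(m, n)) (d : 'cV[R]_n) : Prop :=
  ct + Jt *m d = 0 /\
  forall d' : 'cV[R]_n, ct + Jt *m d' = 0 ->
    beta / 2 * norm2 d ^+ 2 + dotv gt d <= beta / 2 * norm2 d' ^+ 2 + dotv gt d'.
End Defs.

(* Write E = J~ - J and theta = epsJ / gamma.  Since ||E^T w|| <= epsJ ||w|| and
   ||J^T w|| >= gamma ||w||, also ||J~^T w|| >= (gamma - epsJ) ||w||, so the noisy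
   subproblem has the unique solution d = - P~ g~ / beta - J~^T (J~ J~^T)^-1 c~.
   Its normal part has length at most delta ||c~||_1, and Hoelder's inequality with
   the penalty condition bounds g~^T of it by (1 - tau) pi ||c~||_1.  For the
   tangential part, P~ maps every J^T s to a vector of length at most
   theta ||J^T s||; hence ||P~ g|| <= ||P g|| + theta ||g|| and, writing Q = I - P
   and comparing g with the vector y of range(J^T) such that Q~ y = Q~ g,
   ||P g||^2 - ||P~ g||^2 <= theta ||g||^2.  The lower bound on
   ||J^T w|| comes from sigma_min by a variational argument: the infimum mu of
   the Rayleigh quotient of J J^T is an eigenvalue, for otherwise J J^T - mu I
   would be invertible and positive semidefinite, hence coercive. *)

From HB Require Import structures.
From mathcomp Require Import all_boot all_order all_algebra.
From mathcomp Require Import all_classical all_reals all_analysis.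
From mathcomp Require Import ring lra.
Import Order.TTheory GRing.Theory Num.Theory.
Import numFieldNormedType.Exports.
Set Implicit Arguments. Unset Strict Implicit. Unset Printing Implicit Defensive.
Local Open Scope ring_scope.

Section Euclid.
Variable R : realType.
Implicit Types (m n : nat) (a : R).

Lemma dotvC n (u v : 'cV[R]_n) : dotv u v = dotv v u.
Proof. by apply: eq_bigr => i _; rewrite mulrC. Qed.

Lemma dotvDl n (u v w : 'cV[R]_n) : dotv (u + v) w = dotv u w + dotv v w.
Proof. by rewrite /dotv -big_split; apply: eq_bigr => i _; rewrite !mxE mulrDl. Qed.

Lemma dotvZl n a (u w : 'cV[R]_n) : dotv (a *: u) w = a * dotv u w.
Proof. by rewrite /dotv mulr_sumr; apply: eq_bigr => i _; rewrite !mxE mulrA. Qed.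

Lemma dotvNl n (u w : 'cV[R]_n) : dotv (- u) w = - dotv u w.
Proof. by rewrite -scaleN1r dotvZl mulN1r. Qed.

Lemma dotvBl n (u v w : 'cV[R]_n) : dotv (u - v) w = dotv u w - dotv v w.
Proof. by rewrite dotvDl dotvNl. Qed.

Lemma dotvDr n (u v w : 'cV[R]_n) : dotv w (u + v) = dotv w u + dotv w v.
Proof. by rewrite dotvC dotvDl !(dotvC w). Qed.

Lemma dotvZr n a (u w : 'cV[R]_n) : dotv w (a *: u) = a * dotv w u.
Proof. by rewrite dotvC dotvZl dotvC. Qed.

Lemma dotvNr n (u w : 'cV[R]_n) : dotv w (- u) = - dotv w u.
Proof. by rewrite dotvC dotvNl dotvC. Qed.

Lemma dotvBr n (u v w : 'cV[R]_n) : dotv w (u - v) = dotv w u - dotv w v.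
Proof. by rewrite dotvDr dotvNr. Qed.

Lemma dotv0l n (w : 'cV[R]_n) : dotv 0 w = 0.
Proof. by rewrite -(scale0r 0) dotvZl mul0r. Qed.

Lemma dotv0r n (w : 'cV[R]_n) : dotv w 0 = 0.
Proof. by rewrite dotvC dotv0l. Qed.

Lemma dotv_mulmx m n (A : 'M[R]_(m, n)) (u : 'cV[R]_m) (v : 'cV[R]_n) :
  dotv u (A *m v) = dotv (A^T *m u) v.
Proof.
have dotvE k (x y : 'cV[R]_k) : dotv x y = (x^T *m y) 0 0.
  by rewrite mxE; apply: eq_bigr => i _; rewrite mxE.
by rewrite !dotvE trmx_mul trmxK mulmxA.
Qed.

Lemma dotvv_ge0 n (v : 'cV[R]_n) : 0 <= dotv v v.
Proof. by apply: sumr_ge0 => i _; rewrite -expr2 sqr_ge0. Qed.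

Lemma dotvv_eq0 n (v : 'cV[R]_n) : (dotv v v == 0) = (v == 0).
Proof.
apply/idP/eqP => [|->]; last by rewrite dotv0l.
rewrite psumr_eq0 => [/allP v0|i _]; last by rewrite -expr2 sqr_ge0.
apply/matrixP => i j; rewrite (ord1 j) mxE.
by have := v0 i (mem_index_enum _); rewrite -expr2 sqrf_eq0 => /eqP.
Qed.

Lemma norm2_ge0 n (v : 'cV[R]_n) : 0 <= norm2 v.
Proof. exact: sqrtr_ge0. Qed.

Lemma norm2_sqr n (v : 'cV[R]_n) : norm2 v ^+ 2 = dotv v v.
Proof. by rewrite sqr_sqrtr // dotvv_ge0. Qed.

Lemma norm2_eq0 n (v : 'cV[R]_n) : (norm2 v == 0) = (v == 0).
Proof. by rewrite -sqrf_eq0 norm2_sqr dotvv_eq0. Qed.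

Lemma norm2_gt0 n (v : 'cV[R]_n) : (0 < norm2 v) = (v != 0).
Proof. by rewrite lt_def norm2_ge0 norm2_eq0 andbT. Qed.

Lemma norm20 n : norm2 (0 : 'cV[R]_n) = 0.
Proof. by apply/eqP; rewrite norm2_eq0. Qed.

Lemma norm2Z n a (v : 'cV[R]_n) : norm2 (a *: v) = `|a| * norm2 v.
Proof. by rewrite /norm2 dotvZl dotvZr mulrA -expr2 sqrtrM ?sqr_ge0 // sqrtr_sqr. Qed.

Lemma norm2N n (v : 'cV[R]_n) : norm2 (- v) = norm2 v.
Proof. by rewrite -scaleN1r norm2Z normrN1 mul1r. Qed.

Lemma norm2D_sqr n (u v : 'cV[R]_n) :
  norm2 (u + v) ^+ 2 = norm2 u ^+ 2 + 2 * dotv u v + norm2 v ^+ 2.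
Proof. by rewrite !norm2_sqr !(dotvDl, dotvDr) (dotvC v u); ring. Qed.

End Euclid.

Section CauchySchwarz.
Variable R : realType.
Implicit Types n : nat.

Lemma discriminant_le (a b c : R) :
  0 <= c -> (forall t, 0 <= a - 2 * t * b + t ^+ 2 * c) -> b ^+ 2 <= a * c.
Proof.
move=> c0 q0; have [cz|cn0] := eqVneq c 0.
  have [->|b0] := eqVneq b 0; first by rewrite cz expr0n mulr0.
  have := q0 ((a + 1) / (2 * b)).
  have -> : a - 2 * ((a + 1) / (2 * b)) * b + ((a + 1) / (2 * b)) ^+ 2 * c = -1.
    by rewrite cz; field.
  lra.
have cp : 0 < c by rewrite lt_def cn0.
have := q0 (b / c).
have -> : a - 2 * (b / c) * b + (b / c) ^+ 2 * c = (a * c - b ^+ 2) / c by field.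
by rewrite pmulr_lge0 ?invr_gt0 // subr_ge0.
Qed.

Lemma psd_cauchy_schwarz n (B : 'M[R]_n) (u v : 'cV[R]_n) :
  B^T = B -> (forall w, 0 <= dotv w (B *m w)) ->
  dotv u (B *m v) ^+ 2 <= dotv u (B *m u) * dotv v (B *m v).
Proof.
move=> Bsym Bpsd; apply: discriminant_le => // t.
have symB : dotv v (B *m u) = dotv u (B *m v) by rewrite dotv_mulmx Bsym dotvC.
move: (Bpsd (u - t *: v)).
rewrite mulmxBr -scalemxAr !(dotvBl, dotvBr, dotvZl, dotvZr) symB.
by congr (0 <= _); ring.
Qed.

Lemma cauchy_schwarz n (u v : 'cV[R]_n) : `|dotv u v| <= norm2 u * norm2 v.
Proof.
have psd1 (w : 'cV[R]_n) : 0 <= dotv w (1%:M *m w) by rewrite mul1mx dotvv_ge0.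
have := psd_cauchy_schwarz u v (trmx1 _ _) psd1; rewrite !mul1mx.
by rewrite -ler_sqrt ?mulr_ge0 ?dotvv_ge0 // sqrtr_sqr sqrtrM ?dotvv_ge0.
Qed.

Lemma dotv_le n (u v : 'cV[R]_n) : dotv u v <= norm2 u * norm2 v.
Proof. exact: le_trans (ler_norm _) (cauchy_schwarz u v). Qed.

Lemma norm2D_le n (u v : 'cV[R]_n) : norm2 (u + v) <= norm2 u + norm2 v.
Proof.
rewrite -(@ler_pXn2r _ 2) ?nnegrE ?addr_ge0 ?norm2_ge0 // norm2D_sqr.
by have := dotv_le u v; lra.
Qed.
End CauchySchwarz.

Section Norms.
Variable R : realType.
Implicit Types (m n : nat).
Local Open Scope classical_set_scope.

Lemma norm2B_le n (u v : 'cV[R]_n) : norm2 (u - v) <= norm2 u + norm2 v.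
Proof. by rewrite -(norm2N v); apply: norm2D_le. Qed.

Lemma norm1_ge0 n (v : 'cV[R]_n) : 0 <= norm1 v.
Proof. exact: sumr_ge0. Qed.

Lemma norm1N n (v : 'cV[R]_n) : norm1 (- v) = norm1 v.
Proof. by apply: eq_bigr => i _; rewrite mxE normrN. Qed.

Lemma norm1D_le n (u v : 'cV[R]_n) : norm1 (u + v) <= norm1 u + norm1 v.
Proof. by rewrite /norm1 -big_split; apply: ler_sum => i _; rewrite mxE ler_normD. Qed.

Lemma norm1B_le n (u v : 'cV[R]_n) : norm1 (u - v) <= norm1 u + norm1 v.
Proof. by rewrite -(norm1N v); apply: norm1D_le. Qed.

Lemma norm2_le_norm1 n (v : 'cV[R]_n) : norm2 v <= norm1 v.
Proof.
rewrite -(@ler_pXn2r _ 2) ?nnegrE ?norm2_ge0 ?norm1_ge0 //.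
rewrite norm2_sqr /dotv /norm1 expr2 big_distrlr /=; apply: ler_sum => i _.
rewrite (bigD1 i) //= -normrM -[X in X <= _]addr0 lerD ?ler_norm //.
by apply: sumr_ge0 => j _; rewrite mulr_ge0.
Qed.

Lemma dotv_le_normInf_norm1 n (u v : 'cV[R]_n) : `|dotv u v| <= normInf u * norm1 v.
Proof.
rewrite /dotv /norm1 mulr_sumr; apply: le_trans (ler_norm_sum _ _ _) _.
apply: ler_sum => i _; rewrite normrM ler_wpM2r //.
by apply/bigmax_geP; right; exists i.
Qed.

Lemma norm1_mulmx_bounded m n (A : 'M[R]_(m, n)) :
  exists K, forall x, norm1 (A *m x) <= K * norm2 x.
Proof.
exists (\sum_(i < m) norm2 (row i A)^T) => x.
rewrite /norm1 mulr_suml; apply: ler_sum => i _.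
have -> : (A *m x) i 0 = dotv (row i A)^T x.
  by rewrite mxE; apply: eq_bigr => j _; rewrite !mxE.
exact: cauchy_schwarz.
Qed.

Lemma opnorm12_has_ubound m n (A : 'M[R]_(m, n)) :
  has_ubound [set norm1 (A *m x) / norm2 x | x in [set x : 'cV[R]_n | x != 0]].
Proof.
have [K HK] := norm1_mulmx_bounded A.
exists K => _ [x /= x0 <-]; rewrite ler_pdivrMr ?norm2_gt0 //.
Qed.

Lemma opnorm12_ge0 m n (A : 'M[R]_(m, n)) : 0 <= opnorm12 A.
Proof.
rewrite /opnorm12; set S := (X in sup X).
have [/eqP ->|/set0P [y Sy]] := boolP (S == set0); first by rewrite sup0.
apply: le_trans (ub_le_sup (opnorm12_has_ubound A) Sy).
by case: Sy => x _ <-; rewrite divr_ge0 ?norm1_ge0 ?norm2_ge0.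
Qed.

Lemma opnorm12_le m n (A : 'M[R]_(m, n)) (x : 'cV[R]_n) :
  norm1 (A *m x) <= opnorm12 A * norm2 x.
Proof.
have [->|x0] := eqVneq x 0.
  by rewrite mulmx0 norm20 mulr0 /norm1 big1 // => i _; rewrite mxE normr0.
rewrite -ler_pdivrMr ?norm2_gt0 //.
by apply: (ub_le_sup (opnorm12_has_ubound A)); exists x.
Qed.

Lemma norm2_mulmx_le m n (A : 'M[R]_(m, n)) (x : 'cV[R]_n) :
  norm2 (A *m x) <= opnorm12 A * norm2 x.
Proof. exact: le_trans (norm2_le_norm1 _) (opnorm12_le A x). Qed.

End Norms.

Section SmallestSingularValue.
Variable R : realType.
Local Open Scope classical_set_scope.

Definition rayleigh_min n (M : 'M[R]_n) : R :=
  inf [set dotv v (M *m v) | v in [set v : 'cV[R]_n | norm2 v = 1]].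

Section Semidefinite.
Variables (n : nat) (M : 'M[R]_n).
Hypotheses (Msym : M^T = M) (Mpsd : forall v, 0 <= dotv v (M *m v)).

Lemma rayleigh_min_ge0 : 0 <= rayleigh_min M.
Proof.
rewrite /rayleigh_min; set S := (X in inf X).
have [/eqP ->|S0] := boolP (S == set0); first by rewrite inf0.
by apply: lb_le_inf => [|_ [v _ <-]]; [exact/set0P | exact: Mpsd].
Qed.

Lemma rayleigh_min_le v : rayleigh_min M * norm2 v ^+ 2 <= dotv v (M *m v).
Proof.
have [->|v0] := eqVneq v 0; first by rewrite norm20 expr0n mulr0 dotv0l.
have nv := norm2_gt0 v; rewrite v0 in nv.
have : rayleigh_min M <= dotv ((norm2 v)^-1 *: v) (M *m ((norm2 v)^-1 *: v)).
  apply: ge_inf; first by exists 0 => _ [u _ <-]; exact: Mpsd.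
  exists ((norm2 v)^-1 *: v) => //=.
  by rewrite norm2Z ger0_norm ?invr_ge0 ?norm2_ge0 // mulVf ?gt_eqF.
rewrite -scalemxAr dotvZl dotvZr mulrA -expr2 exprVn.
by rewrite -ler_pdivlMr ?exprn_gt0 // mulrC.
Qed.

Lemma psd_unit_coercive :
  M \in unitmx -> exists2 e, 0 < e & forall v, e * norm2 v ^+ 2 <= dotv v (M *m v).
Proof.
move=> Munit; set K := opnorm12 M + 1; set K' := opnorm12 (invmx M) + 1.
have K0 : 0 < K by rewrite ltr_pwDr ?opnorm12_ge0.
have K'0 : 0 < K' by rewrite ltr_pwDr ?opnorm12_ge0.
exists (K' ^+ 2 * K)^-1; first by rewrite invr_gt0 mulr_gt0 ?exprn_gt0.
move=> v; rewrite mulrC ler_pdivrMr ?mulr_gt0 ?exprn_gt0 //.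
set z := M *m v.
have vz : norm2 v <= K' * norm2 z.
  have -> : v = invmx M *m z by rewrite mulmxA mulVmx ?mul1mx.
  apply: le_trans (norm2_mulmx_le _ _) _.
  by rewrite ler_wpM2r ?norm2_ge0 ?lerDl.
have zv : norm2 z ^+ 2 <= K * dotv v z.
  have Mz : dotv z (M *m z) <= K * norm2 z ^+ 2.
    apply: le_trans (dotv_le _ _) _.
    have := norm2_mulmx_le M z; have := opnorm12_ge0 M; have := norm2_ge0 z.
    rewrite /K; nra.
  have := psd_cauchy_schwarz v z Msym Mpsd.
  rewrite dotv_mulmx Msym -/z -norm2_sqr => CS.
  have [z0|zn0] := eqVneq (norm2 z) 0; first by rewrite z0 expr0n /= mulr_ge0 ?(ltW K0) ?Mpsd.
  have z2 : 0 < norm2 z ^+ 2 by rewrite exprn_gt0 // lt_def zn0 norm2_ge0.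
  by rewrite -(ler_pM2r z2) -expr2 (le_trans CS) // -mulrA mulrCA ler_wpM2l ?Mpsd.
have := Mpsd v; rewrite -/z => vz0.
have nv := norm2_ge0 v; have nz := norm2_ge0 z.
have : norm2 v ^+ 2 <= K' ^+ 2 * norm2 z ^+ 2.
  by rewrite -exprMn ler_pXn2r // nnegrE ?mulr_ge0 ?norm2_ge0 ?(ltW K'0).
nra.
Qed.

Lemma eigenvalue_ge0 a : eigenvalue M a -> 0 <= a.
Proof.
case/eigenvalueP => v vM v0; set u := v^T.
have u0 : u != 0 by apply: contraNneq v0 => u0; rewrite -(trmxK v) -/u u0 trmx0.
have Mu : M *m u = a *: u by rewrite -Msym -trmx_mul vM linearZ.
have := Mpsd u; rewrite Mu dotvZr -norm2_sqr pmulr_lge0 // exprn_gt0 // norm2_gt0; exact: u0.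
Qed.

End Semidefinite.

Lemma rayleigh_min_eigenvalue n (M : 'M[R]_n.+1) :
  M^T = M -> (forall v, 0 <= dotv v (M *m v)) -> eigenvalue M (rayleigh_min M).
Proof.
move=> Msym Mpsd; apply: contraT => not_eigen.
set mu := rayleigh_min M; set B := M - mu%:M.
have dotvB v : dotv v (B *m v) = dotv v (M *m v) - mu * norm2 v ^+ 2.
  by rewrite mulmxBl dotvBr mul_scalar_mx dotvZr norm2_sqr.
have Bsym : B^T = B by rewrite linearB /= tr_scalar_mx Msym.
have Bpsd v : 0 <= dotv v (B *m v) by rewrite dotvB subr_ge0 rayleigh_min_le.
have Bunit : B \in unitmx.
  by rewrite -row_free_unit -kermx_eq0; move: not_eigen; rewrite negbK.
have [e e0 Be] := psd_unit_coercive Bsym Bpsd Bunit.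
suff : mu + e <= mu by rewrite gerDl leNgt e0.
apply: lb_le_inf => [|_ [v /= v1 <-]].
  have c0 : (const_mx 1 : 'cV[R]_n.+1) != 0.
    by apply/eqP => /matrixP /(_ 0 0); rewrite !mxE => /eqP; rewrite oner_eq0.
  pose u : 'cV[R]_n.+1 := (norm2 (const_mx 1 : 'cV[R]_n.+1))^-1 *: const_mx 1.
  exists (dotv u (M *m u)); exists u => //=.
  by rewrite norm2Z ger0_norm ?invr_ge0 ?norm2_ge0 // mulVf // norm2_eq0.
by have := Be v; rewrite dotvB v1 expr1n !mulr1 lerBrDl addrC.
Qed.

Lemma sigma_min_le m n (J : 'M[R]_(m, n)) (w : 'cV[R]_m) :
  sigma_min J * norm2 w <= norm2 (J^T *m w).
Proof.
case: m J w => [|m] J w; first by rewrite (flatmx0 w) norm20 mulr0 norm2_ge0.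
set M := J *m J^T.
have dotvM v : dotv v (M *m v) = norm2 (J^T *m v) ^+ 2.
  by rewrite -mulmxA dotv_mulmx norm2_sqr.
have Msym : M^T = M by rewrite trmx_mul trmxK.
have Mpsd v : 0 <= dotv v (M *m v) by rewrite dotvM sqr_ge0.
have sigma_mu : sigma_min J <= Num.sqrt (rayleigh_min M).
  rewrite ler_sqrt ?rayleigh_min_ge0 //; apply: ge_inf.
    by exists 0 => a; apply: eigenvalue_ge0.
  exact: rayleigh_min_eigenvalue.
rewrite -(@ler_pXn2r _ 2) ?nnegrE ?mulr_ge0 ?norm2_ge0 ?sqrtr_ge0 //.
rewrite -dotvM (le_trans _ (rayleigh_min_le Mpsd w)) // exprMn ler_wpM2r ?sqr_ge0 //.
by rewrite -(sqr_sqrtr (rayleigh_min_ge0 Mpsd)) ler_pXn2r ?nnegrE ?sqrtr_ge0.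
Qed.

End SmallestSingularValue.

Section Projections.
Variable R : realType.

Lemma norm2_trmx_mulmx_le m n (A : 'M[R]_(m, n)) (w : 'cV[R]_m) :
  norm2 (A^T *m w) <= opnorm12 A * norm2 w.
Proof.
set z := A^T *m w.
have [z0|zn0] := eqVneq (norm2 z) 0; first by rewrite z0 mulr_ge0 ?opnorm12_ge0 ?norm2_ge0.
have zp : 0 < norm2 z by rewrite lt_def zn0 norm2_ge0.
rewrite -(ler_pM2r zp) -expr2 norm2_sqr {1}/z -dotv_mulmx.
apply: le_trans (dotv_le _ _) _.
by rewrite [X in _ <= X]mulrAC [X in _ <= X]mulrC ler_wpM2l ?norm2_ge0 ?norm2_mulmx_le.
Qed.

Lemma unitmx_ker0 n (A : 'M[R]_n) :
  (forall w : 'cV[R]_n, A *m w = 0 -> w = 0) -> A \in unitmx.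
Proof.
move=> Aker; rewrite -unitmx_tr -row_free_unit; apply: inj_row_free => v vA0.
by apply: trmx_inj; rewrite trmx0; apply: Aker; rewrite -(trmxK A) -trmx_mul vA0 trmx0.
Qed.

Lemma unitmx_mul_tr m n (A : 'M[R]_(m, n)) (a : R) :
  0 < a -> (forall w, a * norm2 w <= norm2 (A^T *m w)) -> A *m A^T \in unitmx.
Proof.
move=> a0 Abound; apply: unitmx_ker0 => w AAw0.
have : norm2 (A^T *m w) ^+ 2 = 0 by rewrite norm2_sqr -dotv_mulmx mulmxA AAw0 dotv0r.
move/eqP; rewrite sqrf_eq0 => /eqP ATw0; apply/eqP; rewrite -norm2_eq0.
by rewrite eq_le norm2_ge0 andbT -(pmulr_rle0 _ a0) -ATw0.
Qed.

Definition rangeproj m n (A : 'M[R]_(m, n)) : 'M[R]_n := A^T *m invmx (A *m A^T) *m A.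

Section OrthogonalSplit.
Variables (m n : nat) (A : 'M[R]_(m, n)).
Hypothesis AAunit : A *m A^T \in unitmx.
Implicit Types (x y : 'cV[R]_n) (w : 'cV[R]_m).
Local Notation P := (nullproj A).
Local Notation Q := (rangeproj A).

Lemma rangeprojE x : Q *m x = A^T *m (invmx (A *m A^T) *m A *m x).
Proof. by rewrite !mulmxA. Qed.

Lemma nullproj_add_rangeproj x : P *m x + Q *m x = x.
Proof. by rewrite mulmxBl mul1mx subrK. Qed.

Lemma mulmx_nullproj : A *m P = 0.
Proof. by rewrite mulmxBr mulmx1 !mulmxA mulmxV // mul1mx subrr. Qed.

Lemma trmx_nullproj : P^T = P.
Proof.
by rewrite linearB /= trmx1 !trmx_mul trmxK trmx_inv trmx_mul trmxK mulmxA.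
Qed.

Lemma nullproj_mul_tr : P *m A^T = 0.
Proof. by rewrite -trmx_nullproj -trmx_mul mulmx_nullproj trmx0. Qed.

Lemma dotv_nullproj_tr x w : dotv (P *m x) (A^T *m w) = 0.
Proof. by rewrite dotv_mulmx trmxK mulmxA mulmx_nullproj mul0mx dotv0l. Qed.

Lemma dotv_nullproj_sym x y : dotv x (P *m y) = dotv (P *m x) y.
Proof. by rewrite dotv_mulmx trmx_nullproj. Qed.

Lemma dotv_proj_split x y : dotv x y = dotv (P *m x) (P *m y) + dotv (Q *m x) (Q *m y).
Proof.
rewrite -{1}(nullproj_add_rangeproj x) -{1}(nullproj_add_rangeproj y).
rewrite !(dotvDl, dotvDr) !rangeprojE dotv_nullproj_tr (dotvC (A^T *m _) (P *m _)).
by rewrite dotv_nullproj_tr addr0 add0r.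
Qed.

Lemma norm2_proj_split x : norm2 x ^+ 2 = norm2 (P *m x) ^+ 2 + norm2 (Q *m x) ^+ 2.
Proof. by rewrite !norm2_sqr dotv_proj_split. Qed.

Lemma dotv_nullproj x : dotv x (P *m x) = norm2 (P *m x) ^+ 2.
Proof.
rewrite -{1}(nullproj_add_rangeproj x) dotvDl rangeprojE (dotvC (A^T *m _)).
by rewrite dotv_nullproj_tr addr0 norm2_sqr.
Qed.

Lemma norm2_nullproj_le x : norm2 (P *m x) <= norm2 x.
Proof.
rewrite -(@ler_pXn2r _ 2) ?nnegrE ?norm2_ge0 //.
by rewrite (norm2_proj_split x) lerDl sqr_ge0.
Qed.

Lemma norm2_rangeproj_le x : norm2 (Q *m x) <= norm2 x.
Proof.
rewrite -(@ler_pXn2r _ 2) ?nnegrE ?norm2_ge0 //.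
by rewrite (norm2_proj_split x) lerDr sqr_ge0.
Qed.

End OrthogonalSplit.
End Projections.

Section Perturbation.
Variable R : realType.

(* In [norm2_nullproj_perturb_sqr_le], [U], [V], [A] and [Y] are the lengths of
   [rangeproj Jt *m x], [nullproj Jt *m x], [rangeproj J *m x] and [y], and [t]
   bounds the sine of the angle between the ranges of [J^T] and [Jt^T]. *)
Lemma sin_theta_ineq (t Y U A V : R) :
  0 <= t -> t < 1 -> 0 <= Y -> 0 <= U -> 0 <= A -> 0 <= V ->
  (1 - t ^+ 2) * Y ^+ 2 <= U ^+ 2 -> U ^+ 2 <= Y * (A + t * V) ->
  (1 - t) * U ^+ 2 <= A ^+ 2 + t * V ^+ 2.
Proof.
move=> t0 t1 Y0 U0 A0 V0 hY hU.
have [->|Un0] := eqVneq U 0; first by rewrite expr0n mulr0 addr_ge0 ?mulr_ge0 ?sqr_ge0.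
have U2 : 0 < U ^+ 2 by rewrite exprn_gt0 // lt_def Un0.
have key : (1 - t ^+ 2) * U ^+ 2 <= (A + t * V) ^+ 2.
  have t2 : 0 <= 1 - t ^+ 2 by nra.
  have hU2 : U ^+ 2 ^+ 2 <= (Y * (A + t * V)) ^+ 2.
    have AtV : 0 <= A + t * V by rewrite addr_ge0 ?mulr_ge0.
    by rewrite ler_pXn2r // nnegrE ?sqr_ge0 ?mulr_ge0.
  rewrite -(ler_pM2r U2); apply: le_trans (_ : (1 - t ^+ 2) * (Y * (A + t * V)) ^+ 2 <= _).
    by rewrite -mulrA -expr2 ler_wpM2l.
  by rewrite exprMn mulrA mulrC ler_wpM2l ?sqr_ge0.
have AV : 2 * A * V <= A ^+ 2 + V ^+ 2 by have := sqr_ge0 (A - V); lra.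
nra.
Qed.

Section JacobianPerturbation.
Variables (m n : nat) (J Jt : 'M[R]_(m, n)) (eJ gamma : R).
Hypotheses (hJt : opnorm12 (Jt - J) <= eJ) (hsig : gamma <= sigma_min J) (heJ : eJ < gamma).
Implicit Types (x : 'cV[R]_n) (w : 'cV[R]_m).
Local Notation P := (nullproj J).
Local Notation Pt := (nullproj Jt).
Local Notation theta := (eJ / gamma).

Let perturb_ge0 : 0 <= eJ.
Proof. exact: le_trans (opnorm12_ge0 _) hJt. Qed.

Let gamma_gt0 : 0 < gamma.
Proof. exact: le_lt_trans perturb_ge0 heJ. Qed.

Let theta_ge0 : 0 <= theta.
Proof. exact: divr_ge0 perturb_ge0 (ltW gamma_gt0). Qed.

Let theta_lt1 : theta < 1.
Proof. by rewrite ltr_pdivrMr ?gamma_gt0 ?mul1r. Qed.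

Lemma norm2_tr_ge w : gamma * norm2 w <= norm2 (J^T *m w).
Proof. exact: le_trans (ler_wpM2r (norm2_ge0 w) hsig) (sigma_min_le J w). Qed.

Lemma norm2_perturb_tr_le w : norm2 ((Jt - J)^T *m w) <= eJ * norm2 w.
Proof. exact: le_trans (norm2_trmx_mulmx_le _ _) (ler_wpM2r (norm2_ge0 w) hJt). Qed.

Lemma norm2_perturbed_tr_ge w : (gamma - eJ) * norm2 w <= norm2 (Jt^T *m w).
Proof.
have := norm2_tr_ge w; have := norm2_perturb_tr_le w.
have := norm2B_le (Jt^T *m w) ((Jt - J)^T *m w).
by rewrite -mulmxBl linearB /= opprB addrC subrK; lra.
Qed.

Lemma unitmx_JJt : J *m J^T \in unitmx.
Proof. exact: unitmx_mul_tr gamma_gt0 norm2_tr_ge. Qed.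

Lemma unitmx_JtJt : Jt *m Jt^T \in unitmx.
Proof. by apply: unitmx_mul_tr norm2_perturbed_tr_ge; rewrite subr_gt0. Qed.

Lemma norm2_nullproj_perturbed_tr_le w :
  norm2 (Pt *m (J^T *m w)) <= theta * norm2 (J^T *m w).
Proof.
have -> : Pt *m (J^T *m w) = - (Pt *m ((Jt - J)^T *m w)).
  rewrite [(Jt - J)^T]linearB /= (mulmxBl Jt^T) (mulmxBr Pt) (mulmxA Pt Jt^T).
  by rewrite (nullproj_mul_tr unitmx_JtJt) mul0mx sub0r opprK.
rewrite norm2N (le_trans (norm2_nullproj_le unitmx_JtJt _)) //.
apply: le_trans (norm2_perturb_tr_le w) _.
apply: le_trans (ler_wpM2l theta_ge0 (norm2_tr_ge w)).
by rewrite mulrA divfK ?gt_eqF ?gamma_gt0.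
Qed.

Lemma unitmx_JtJ : Jt *m J^T \in unitmx.
Proof.
apply: unitmx_ker0 => w JtJw.
have Qt0 : rangeproj Jt *m (J^T *m w) = 0.
  by rewrite rangeprojE -mulmxA (mulmxA Jt) JtJw !mulmx0.
have : norm2 (J^T *m w) <= theta * norm2 (J^T *m w).
  rewrite -{1}(nullproj_add_rangeproj Jt (J^T *m w)) Qt0 addr0.
  exact: norm2_nullproj_perturbed_tr_le.
move=> Jw_le; have J0 : norm2 (J^T *m w) = 0.
  by have := theta_lt1; have := norm2_ge0 (J^T *m w); nra.
apply/eqP; rewrite -norm2_eq0 eq_le norm2_ge0 andbT -(pmulr_rle0 _ gamma_gt0) -J0.
exact: norm2_tr_ge.
Qed.

Lemma norm2_nullproj_perturb_le x : norm2 (Pt *m x) <= norm2 (P *m x) + theta * norm2 x.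
Proof.
rewrite -{1}(nullproj_add_rangeproj J x) mulmxDr (rangeprojE J x).
apply: le_trans (norm2D_le _ _) _; apply: lerD; first exact: norm2_nullproj_le unitmx_JtJt _.
apply: le_trans (norm2_nullproj_perturbed_tr_le _) _.
by rewrite ler_wpM2l ?theta_ge0 // -rangeprojE norm2_rangeproj_le ?unitmx_JJt.
Qed.

Lemma norm2_nullproj_perturb_sqr_le x :
  norm2 (P *m x) ^+ 2 - norm2 (Pt *m x) ^+ 2 <= theta * norm2 x ^+ 2.
Proof.
pose y := J^T *m (invmx (Jt *m J^T) *m (Jt *m x)).
have Jty : Jt *m y = Jt *m x by rewrite /y !mulmxA mulmxV ?unitmx_JtJ // mul1mx.
have Qty : rangeproj Jt *m y = rangeproj Jt *m x by rewrite !rangeprojE -!mulmxA Jty.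
have Pty := norm2_nullproj_perturbed_tr_le (invmx (Jt *m J^T) *m (Jt *m x)); rewrite -/y in Pty.
have hY : (1 - theta ^+ 2) * norm2 y ^+ 2 <= norm2 (rangeproj Jt *m x) ^+ 2.
  have := norm2_proj_split unitmx_JtJt y; rewrite Qty => split_y.
  have : norm2 (Pt *m y) ^+ 2 <= (theta * norm2 y) ^+ 2.
    by rewrite ler_pXn2r // nnegrE ?norm2_ge0 // mulr_ge0 ?norm2_ge0 ?theta_ge0.
  lra.
have hU : norm2 (rangeproj Jt *m x) ^+ 2
    <= norm2 y * (norm2 (rangeproj J *m x) + theta * norm2 (Pt *m x)).
  have : dotv y x = dotv y (rangeproj J *m x).
    rewrite -{1}(nullproj_add_rangeproj J x) dotvDr dotvC /y.
    by rewrite dotv_nullproj_tr ?unitmx_JJt // add0r.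
  rewrite (dotv_proj_split unitmx_JtJt y x) Qty -norm2_sqr => split_yx.
  have := dotv_le y (rangeproj J *m x); have := cauchy_schwarz (Pt *m y) (Pt *m x).
  rewrite ler_norml => /andP [CS _].
  have := ler_wpM2r (norm2_ge0 (Pt *m x)) Pty.
  lra.
have := sin_theta_ineq theta_ge0 theta_lt1 (norm2_ge0 _) (norm2_ge0 _) (norm2_ge0 _) (norm2_ge0 _) hY hU.
have := norm2_proj_split unitmx_JJt x; rewrite [norm2 x ^+ 2](norm2_proj_split unitmx_JtJt x).
lra.
Qed.

End JacobianPerturbation.
End Perturbation.

Section QuadraticProgram.
Variable R : realType.

Definition qp_minimizer m n (beta : R) (gt : 'cV[R]_n) (ct : 'cV[R]_m) (A : 'M[R]_(m, n)) :=
  - (beta^-1 *: (nullproj A *m gt)) - A^T *m (invmx (A *m A^T) *m ct).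

Variables (m n : nat) (beta : R) (gt : 'cV[R]_n) (ct : 'cV[R]_m) (A : 'M[R]_(m, n)).
Hypotheses (AAunit : A *m A^T \in unitmx) (beta0 : 0 < beta).
Local Notation dstar := (qp_minimizer beta gt ct A).

Lemma qp_minimizer_feasible : ct + A *m dstar = 0.
Proof.
rewrite mulmxBr mulmxN -scalemxAr mulmxA mulmx_nullproj // mul0mx scaler0 oppr0 sub0r.
by rewrite !mulmxA mulmxV // mul1mx subrr.
Qed.

Lemma qp_minimizer_gradient :
  beta *: dstar + gt = A^T *m (invmx (A *m A^T) *m A *m gt - beta *: (invmx (A *m A^T) *m ct)).
Proof.
rewrite mulmxBr -scalemxAr -rangeprojE /qp_minimizer scalerBr scalerN scalerA.
rewrite mulfV ?gt_eqF // scale1r addrAC; congr (_ - _).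
by rewrite -{2}(nullproj_add_rangeproj A gt) addKr.
Qed.

Lemma qp_solution_minimizer d : qp_solution beta gt ct A d -> d = dstar.
Proof.
case=> feas opt; set h := d - dstar.
have Ah0 : A *m h = 0.
  by rewrite mulmxBr -[A *m d](addKr ct) feas -[A *m dstar](addKr ct) qp_minimizer_feasible subrr.
have orth : beta * dotv dstar h + dotv gt h = 0.
  by rewrite -dotvZl -dotvDl qp_minimizer_gradient dotvC dotv_mulmx trmxK Ah0 dotv0l.
have hopt := opt dstar qp_minimizer_feasible.
have ed : d = dstar + h by rewrite /h addrC subrK.
clearbody h; rewrite ed norm2D_sqr dotvDr in hopt *.
have : norm2 h ^+ 2 <= 0.
  by rewrite -(pmulr_rle0 _ (_ : 0 < beta / 2)) ?divr_gt0 //; lra.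
move=> h0; suff -> : h = 0 by rewrite addr0.
by apply/eqP; rewrite -norm2_eq0 -sqrf_eq0 eq_le h0 sqr_ge0.
Qed.

End QuadraticProgram.

Section NoisySQPStep.
Variable R : realType.
Variables (m n : nat) (J Jt : 'M[R]_(m, n)) (g gt : 'cV[R]_n) (c ct : 'cV[R]_m).
Variables (epsc epsg epsJ gamma beta pi tau : R).
Hypotheses (hc : norm1 (ct - c) <= epsc) (hg : norm2 (gt - g) <= epsg).
Hypotheses (hJ : opnorm12 (Jt - J) <= epsJ) (hsig : gamma <= sigma_min J) (hgamma : epsJ < gamma).
Hypotheses (hbeta : 0 < beta) (htau : tau < 1).
Hypothesis hpi : (1 - tau)^-1 * normInf (invmx (Jt *m Jt^T) *m Jt *m gt) <= pi.
Local Notation d := (qp_minimizer beta gt ct Jt).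
Local Notation z := (Jt^T *m (invmx (Jt *m Jt^T) *m ct)).
Local Notation delta := ((gamma - epsJ)^-1).
Local Notation theta := (epsJ / gamma).
Local Notation P := (nullproj J).
Local Notation Pt := (nullproj Jt).
Let JtJt_unit := unitmx_JtJt hJ hsig hgamma.
Let beta_inv_ge0 : 0 <= beta^-1. Proof. by rewrite invr_ge0 ltW. Qed.

Lemma norm1_ct_le : norm1 ct <= norm1 c + epsc.
Proof. by rewrite -(subrK c ct) addrC (le_trans (norm1D_le _ _)) // lerD2l. Qed.

Lemma norm2_normal_step_le : norm2 z <= delta * (norm1 c + epsc).
Proof.
have gap : 0 < gamma - epsJ by rewrite subr_gt0.
set w := invmx (Jt *m Jt^T) *m ct.
have zw : norm2 z ^+ 2 <= norm2 w * norm2 ct.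
  by rewrite norm2_sqr -dotv_mulmx mulmxA /w mulmxA mulmxV // mul1mx dotv_le.
have wz := norm2_perturbed_tr_ge hJ hsig w.
have ct_le : norm2 ct <= norm1 c + epsc := le_trans (norm2_le_norm1 ct) norm1_ct_le.
rewrite ler_pdivlMl //.
have [z0|zn0] := eqVneq (norm2 z) 0.
  by rewrite z0 mulr0 (le_trans (norm1_ge0 _) norm1_ct_le).
have zp : 0 < norm2 z by rewrite lt_def zn0 norm2_ge0.
rewrite -(ler_pM2l zp); apply: le_trans (_ : norm2 z * norm2 ct <= _); last first.
  by rewrite ler_wpM2l ?norm2_ge0.
by have := norm2_ge0 ct; nra.
Qed.

Lemma dotv_normal_step_le : `|dotv gt z| <= (1 - tau) * pi * (norm1 c + epsc).
Proof.
have -> : dotv gt z = dotv (invmx (Jt *m Jt^T) *m Jt *m gt) ct.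
  by rewrite dotv_mulmx trmxK dotv_mulmx trmx_inv trmx_mul trmxK mulmxA.
apply: le_trans (dotv_le_normInf_norm1 _ _) _.
have t0 : 0 < 1 - tau by rewrite subr_gt0.
have hN : normInf (invmx (Jt *m Jt^T) *m Jt *m gt) <= (1 - tau) * pi.
  by rewrite -ler_pdivrMl // mulrC.
by apply: ler_pM => //; [exact: bigmax_ge_id | exact: norm1_ge0 | exact: norm1_ct_le].
Qed.

Lemma norm2_tangential_step_le : norm2 (Pt *m gt) <= norm2 (P *m g) + theta * norm2 g + epsg.
Proof.
rewrite -(subrK g gt) mulmxDr (le_trans (norm2D_le _ _)) // addrC lerD //.
  exact: norm2_nullproj_perturb_le hJ hsig hgamma g.
exact: le_trans (norm2_nullproj_le JtJt_unit _) hg.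
Qed.

Lemma step_linear_term_le :
  dotv g d <= beta^-1 * (- norm2 (P *m g) ^+ 2 + theta * norm2 g ^+ 2 + epsg * norm2 g)
              + (1 - tau) * pi * (norm1 c + epsc) + epsg * (delta * (norm1 c + epsc)).
Proof.
have split_d : dotv g d = - beta^-1 * dotv g (Pt *m gt) - dotv gt z - dotv (g - gt) z.
  by rewrite /qp_minimizer dotvBr dotvNr dotvZr dotvBl; ring.
have tangential :
    - dotv g (Pt *m gt) <= - norm2 (P *m g) ^+ 2 + theta * norm2 g ^+ 2 + epsg * norm2 g.
  have := norm2_nullproj_perturb_sqr_le hJ hsig hgamma g.
  rewrite -(subrK g gt) mulmxDr dotvDr dotv_nullproj // dotv_nullproj_sym //.
  have := cauchy_schwarz (Pt *m g) (gt - g); rewrite ler_norml => /andP [CS _].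
  have : norm2 (Pt *m g) * norm2 (gt - g) <= norm2 g * epsg.
    by apply: ler_pM; rewrite ?norm2_ge0 ?norm2_nullproj_le.
  lra.
have := ler_wpM2l beta_inv_ge0 tangential.
have := dotv_normal_step_le; rewrite ler_norml => /andP [gz _].
have : `|dotv (g - gt) z| <= epsg * (delta * (norm1 c + epsc)).
  apply: le_trans (cauchy_schwarz _ _) (ler_pM _ _ _ norm2_normal_step_le) => //.
  - exact: norm2_ge0.
  - exact: norm2_ge0.
  - by rewrite -norm2N opprB.
rewrite ler_norml => /andP [gtz _].
rewrite split_d; lra.
Qed.

Lemma step_constraint_le :
  norm1 (c + J *m d) <= epsc + epsJ * (delta * (norm1 c + epsc)
                                       + beta^-1 * (norm2 (P *m g) + theta * norm2 g + epsg)).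
Proof.
have -> : c + J *m d = (c - ct) - (Jt - J) *m d.
  rewrite -[c + _]subr0 -(qp_minimizer_feasible beta gt ct JtJt_unit) opprD addrACA.
  by rewrite -mulmxBl -[J - Jt]opprB mulNmx.
apply: le_trans (norm1B_le _ _) _; rewrite -norm1N opprB lerD //.
apply: le_trans (opnorm12_le _ _) _; apply: ler_pM; rewrite ?opnorm12_ge0 ?norm2_ge0 //.
apply: le_trans (norm2B_le _ _) _; rewrite norm2N norm2Z ger0_norm // addrC.
rewrite lerD ?norm2_normal_step_le // ler_wpM2l //.
exact: norm2_tangential_step_le.
Qed.

End NoisySQPStep.

Unset Implicit Arguments. Set Strict Implicit.

Theorem lemma3p2 (R : realType) (m n : nat) (hmn : (m < n)%N)
  (f : 'cV[R]_n -> R) (c : 'cV[R]_n -> 'cV[R]_m)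
  (g : 'cV[R]_n -> 'cV[R]_n) (J : 'cV[R]_n -> 'M[R]_(m, n))
  (hg : forall x, differentiable f x /\ forall v, 'd f x v = dotv (g x) v)
  (hJ : forall x, differentiable c x /\ forall v, 'd c x v = J x *m v)
  (ft : 'cV[R]_n -> R) (ct : 'cV[R]_n -> 'cV[R]_m)
  (gt : 'cV[R]_n -> 'cV[R]_n) (Jt : 'cV[R]_n -> 'M[R]_(m, n))
  (epsf epsc epsg epsJ : R)
  (hf_err : forall x, `|ft x - f x| <= epsf)
  (hc_err : forall x, norm1 (ct x - c x) <= epsc)
  (hg_err : forall x, norm2 (gt x - g x) <= epsg)
  (hJ_err : forall x, opnorm12 (Jt x - J x) <= epsJ)
  (x : nat -> 'cV[R]_n) (gamma : R)
  (hsig : forall k, sigma_min (J (x k)) >= gamma)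
  (hgamma : gamma > epsJ)
  (beta : nat -> R) (hbeta : forall k, 0 < beta k)
  (d : nat -> 'cV[R]_n)
  (hd : forall k, qp_solution (beta k) (gt (x k)) (ct (x k)) (Jt (x k)) (d k))
  (tau : R) (htau0 : 0 < tau) (htau1 : tau < 1)
  (pi : nat -> R) (hpi0 : forall k, 0 < pi k)
  (hpi : forall k, pi k >= (1 - tau)^-1 *
     normInf (invmx (Jt (x k) *m (Jt (x k))^T) *m Jt (x k) *m gt (x k))) :
  let delta := (gamma - epsJ)^-1 in
  let eta := gamma^-1 in
  forall k : nat,
  let gk := g (x k) in let ck := c (x k) in let Jk := J (x k) in
  let Pk := nullproj Jk in
  dotv gk (d k) + pi k * norm1 (ck + Jk *m d k) - pi k * norm1 ck
  <= - (beta k)^-1 * dotv gk (Pk *m gk)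
     + (beta k)^-1 * (norm2 gk ^+ 2 * eta * epsJ + epsg * norm2 gk)
     - tau * pi k * norm1 ck
     + epsg * delta * (norm1 ck + epsc)
     + pi k * ((2 - tau) * epsc
               + epsJ * (delta * (norm1 ck + epsc)
                         + (beta k)^-1 * (norm2 (Pk *m gk) + norm2 gk * eta * epsJ + epsg))).
Proof.
cbv zeta => k.
have JJt_unit := unitmx_JJt (hJ_err (x k)) (hsig k) hgamma.
have JtJt_unit := unitmx_JtJt (hJ_err (x k)) (hsig k) hgamma.
rewrite (qp_solution_minimizer JtJt_unit (hbeta k) (hd k)) dotv_nullproj //.
have lin := step_linear_term_le (hc_err (x k)) (hg_err (x k)) (hJ_err (x k)) (hsig k)
  hgamma (hbeta k) htau1 (hpi k).
have cons := step_constraint_le (hc_err (x k)) (hg_err (x k)) (hJ_err (x k)) (hsig k)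
  hgamma (hbeta k).
have := ler_wpM2l (ltW (hpi0 k)) cons.
lra.
Qed.
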